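(* Consider the permanently Colored Magnetic Tower of Hanoi with $N\ge 1$ disks, posts $S$ (source), $I$ (intermediate), $D$ (destination), where $S$ is colored Red, $D$ is colored Blue, and $I$ is colored either Blue or Red (both versions). Then the minimum number of moves needed to transfer all $N$ disks from $S$ to $D$ is $$S_{100}(N)=\sum_{k=1}^N 3^{k-1}=\frac{3^N-1}{2},$$ and in such a minimal solution disk $k$ (disks numbered $1,\dots,N$ from largest to smallest) is moved exactly $P_{100}(k)=3^{k-1}$ times.
   Context: Magnetic Tower of Hanoi (MToH): there are three posts and $N$ disks of distinct diameters, numbered $1$ (largest) to $N$ (smallest). Each disk has two faces, one Red and one Blue. Initially all $N$ disks are stacked on the source post $S$ in decreasing size from bottom to top, each with its Red face up (Blue face down). A move consists of lifting the top disk of some post, turning it upside down, and placing it on top of another post. Rules: (Size rule) a disk may never be placed on a smaller disk; (Magnet rule) a disk may never be placed so that its downward-facing side has the same color as the upward-facing side of the disk it lands on. The puzzle is solved when all $N$ disks are on the destination post $D$ (one of the two initially empty posts) in decreasing size from bottom to top. In the permanently Colored MToH, each post additionally carries a fixed color, and any disk lying on a post (whether or not the post contains other disks) must have its upward-facing side of that post's color. *)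

From mathcomp Require Import all_boot.
Set Implicit Arguments. Unset Strict Implicit. Unset Printing Implicit Defensive.

(* Magnetic Tower of Hanoi.  Disks are 'I_N; ordinal i corresponds to the
   paper's disk i+1, so ordinal 0 is the largest disk and ordinal N-1 the
   smallest.  Disk i is larger than disk j iff i < j. *)

Inductive post := PS | PI | PD.
Inductive color := Red | Blue.

Definition flipc (c : color) : color := match c with Red => Blue | Blue => Red end.

(* On each post the disks are stacked in decreasing size from bottom
   to top (this invariant is preserved by the size rule), so the stack on a
   post is determined by the set of disks on it; its top disk is the
   smallest one, i.e. the one with the largest index. *)
Record config (N : nat) := Config { pos : 'I_N -> post; up : 'I_N -> color }.

Definition init_config (N : nat) : config N := Config (fun _ => PS) (fun _ => Red).

Definition final_config N (s : config N) : Prop := forall d, pos s d = PD.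

Definition is_top N (s : config N) (p : post) (d : 'I_N) : Prop :=
  pos s d = p /\ forall e, pos s e = p -> (e <= d)%N.

Definition colored_ok N (pc : post -> color) (s : config N) : Prop :=
  forall d, up s d = pc (pos s d).

Definition cmove N (pc : post -> color) (s t : config N) (d : 'I_N) : Prop :=
  exists p q : post,
    [/\ p <> q, is_top s p d,
        (forall e, pos s e = q -> (e < d)%N)
      & (* magnet rule: the downward face of d after flipping (= its old upward
           face) differs from the upward face of the top disk of q *)
        (forall e, is_top s q e -> up s d <> up s e)] /\
        [/\ pos t d = q, up t d = flipc (up s d),
            (forall e, e <> d -> pos t e = pos s e /\ up t e = up s e)
          & colored_ok pc t].

Fixpoint cpath N (pc : post -> color) (s : config N) (ms : seq ('I_N * config N)) : Prop :=
  match ms with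
  | [::] => True
  | (d, t) :: ms' => cmove pc s t d /\ cpath pc t ms'
  end.

Definition csolution N (pc : post -> color) (ms : seq ('I_N * config N)) : Prop :=
  cpath pc (init_config N) ms /\ final_config (last (init_config N) (map snd ms)).

Definition nmoves N (ms : seq ('I_N * config N)) (k : 'I_N) : nat :=
  count (fun x => x.1 == k) ms.

Definition coloring (cI : color) (p : post) : color :=
  match p with PS => Red | PI => cI | PD => Blue end.

From mathcomp Require Import all_boot zify.
Set Implicit Arguments. Unset Strict Implicit. Unset Printing Implicit Defensive.

(* The colouring lets a disk move only between the post c whose colour differs
   from that of the other two posts and one of those two, and the magnet rule then
   holds automatically: the puzzle is the Tower of Hanoi on the path X - c - Y.
   When the largest disk of a stack leaves a leaf, it goes to c and all smaller
   disks sit on the other leaf.  So a leaf-to-centre transfer of the stack costs a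
   leaf-to-leaf plus a leaf-to-centre transfer of the smaller disks, and a
   leaf-to-leaf transfer costs three leaf-to-leaf transfers of them.  Hence the
   j-th largest disk moves at least 3^(j-1) times (twice as often leaf to leaf),
   by time reversal also from centre to leaf, and the recursive strategy attains
   these bounds.  As the bounds add up to the total, a minimal solution attains
   each of them. *)

Lemma post_eq_dec (p q : post) : {p = q} + {p <> q}.
Proof. decide equality. Qed.

Definition edge (c p q : post) : Prop := (p = c /\ q <> c) \/ (p <> c /\ q = c).

Lemma edge_sym c p q : edge c p q -> edge c q p.
Proof. rewrite /edge; tauto. Qed.

Lemma edge_neq c p q : edge c p q -> p <> q.
Proof. by case=> [[-> /nesym]|[? ->]]. Qed.

Definition other (p q : post) : post :=
  match p, q with
  | PS, PI | PI, PS => PD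
  | PS, PD | PD, PS => PI
  | _, _ => PS
  end.

Lemma otherP p q r : p <> q -> r <> p -> r <> q -> r = other p q.
Proof. by case: p; case: q; case: r => //= [] []. Qed.

Lemma other_neq p q : p <> q -> p <> other p q /\ other p q <> q.
Proof. by case: p; case: q => //= []. Qed.

Lemma sum_pow3 n : (2 * \sum_(k < n) 3 ^ k).+1 = 3 ^ n.
Proof. by elim: n => [|n IH]; rewrite ?big_ord0 // big_ord_recr expnS -IH /=; lia. Qed.

Section LinearHanoi.

Variables (N : nat) (c : post).

Definition set_post (f : 'I_N -> post) (d : 'I_N) (q : post) : 'I_N -> post :=
  fun e => if e == d then q else f e.

(* Disks of larger index are smaller: this is the top-disk and the size rule. *)
Definition lmove (f : 'I_N -> post) (d : 'I_N) (q : post) : Prop :=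
  edge c (f d) q /\ forall e : 'I_N, d < e -> f e <> f d /\ f e <> q.

Fixpoint lpath (f : 'I_N -> post) (ms : seq ('I_N * post)) : Prop :=
  if ms is (d, q) :: ms' then lmove f d q /\ lpath (set_post f d q) ms' else True.

Fixpoint run (f : 'I_N -> post) (ms : seq ('I_N * post)) : 'I_N -> post :=
  if ms is (d, q) :: ms' then run (set_post f d q) ms' else f.

Definition disk_moves (ms : seq ('I_N * post)) (k : 'I_N) : nat :=
  count (fun x => x.1 == k) ms.

Lemma set_post_eq f d q : set_post f d q d = q.
Proof. by rewrite /set_post eqxx. Qed.

Lemma set_post_neq f d q e : e != d -> set_post f d q e = f e.
Proof. by rewrite /set_post => /negPf ->. Qed.

Lemma set_post_gt f (d e : 'I_N) q : d < e -> set_post f d q e = f e.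
Proof. by move=> lt_de; rewrite set_post_neq // neq_ltn lt_de orbT. Qed.

Lemma lmove_eq f g d q : f =1 g -> lmove f d q -> lmove g d q.
Proof. by move=> fg [hdq hsm]; split=> [|e]; rewrite -!fg //; apply: hsm. Qed.

Lemma run_eq f g ms : f =1 g -> run f ms =1 run g ms.
Proof.
elim: ms f g => [|[d q] ms IH] f g fg //=.
by apply: IH => e; rewrite /set_post fg.
Qed.

Lemma lpath_eq f g ms : f =1 g -> lpath f ms -> lpath g ms.
Proof.
elim: ms f g => [|[d q] ms IH] f g fg //= [hmv hp]; split; first exact: lmove_eq hmv.
by apply: IH hp => e; rewrite /set_post fg.
Qed.

Lemma run_cat f s1 s2 : run f (s1 ++ s2) = run (run f s1) s2.
Proof. by elim: s1 f => [|[d q] s1 IH] f //=. Qed.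

Lemma lpath_cat f s1 s2 : lpath f (s1 ++ s2) <-> lpath f s1 /\ lpath (run f s1) s2.
Proof. by elim: s1 f => [|[d q] s1 IH] f /=; [tauto | rewrite IH; tauto]. Qed.

Lemma disk_moves_cat s1 d q s2 k :
  disk_moves (s1 ++ (d, q) :: s2) k = disk_moves s1 k + (d == k) + disk_moves s2 k.
Proof. by rewrite /disk_moves count_cat /= addnA. Qed.

Lemma lpath_first_move f ms d : lpath f ms -> run f ms d <> f d ->
  exists s1 q s2, [/\ ms = s1 ++ (d, q) :: s2, run f s1 d = f d, lpath f s1,
                      lmove (run f s1) d q & lpath (set_post (run f s1) d q) s2].
Proof.
elim: ms f => [|[d' q] ms IH] f /=; first by move=> _ [].
case: (eqVneq d' d) => [<- [hmv hp] _|ne_d'd [hmv hp]]; first by exists [::], q, ms.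
have ne_dd' : d != d' by rewrite eq_sym.
rewrite -(set_post_neq f q ne_dd') => /(IH _ hp) [s1 [q' [s2 [-> hs1 hp1 hmv' hp2]]]].
by exists ((d', q) :: s1), q', s2; split; rewrite //= hs1 set_post_neq.
Qed.

Lemma lpath_last_move f ms d : lpath f ms -> run f ms d <> f d ->
  exists s1 q s2, [/\ ms = s1 ++ (d, q) :: s2, run f ms d = q, lpath f s1,
                      lmove (run f s1) d q & lpath (set_post (run f s1) d q) s2].
Proof.
elim: ms f => [|[d' q] ms IH] f /=; first by move=> _ [].
move=> [hmv hp] hd.
case: (post_eq_dec (run (set_post f d' q) ms d) (set_post f d' q d)) => [hfix|hmoved].
  case: (eqVneq d' d) => [ed|ne_d'd]; last first.
    by move: hd; rewrite hfix set_post_neq // eq_sym.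
  by subst d'; exists [::], q, ms; rewrite hfix set_post_eq.
have [s1 [q' [s2 [-> hq hp1 hmv' hp2]]]] := IH _ hp hmoved.
by exists ((d', q) :: s1), q', s2.
Qed.

Section Leaves.

Variables (X Y : post).
Hypotheses (X_leaf : X <> c) (Y_leaf : Y <> c) (X_neq_Y : X <> Y).

Lemma lmove_from_leaf g d q : lmove g d q -> g d = X ->
  q = c /\ forall e : 'I_N, d < e -> g e = Y.
Proof.
move=> [hdq hsm] hgd; rewrite hgd in hdq hsm.
have hq : q = c by case: hdq => [[]|[]].
split=> // e /hsm[h1 h2]; rewrite hq in h2.
exact: etrans (otherP X_leaf h1 h2) (esym (otherP X_leaf (nesym X_neq_Y) Y_leaf)).
Qed.

Lemma lmove_to_leaf g d : lmove g d Y -> g d = c /\ forall e : 'I_N, d < e -> g e = X.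
Proof.
move=> [hdq hsm]; have hgd : g d = c by case: hdq => [[]|[]].
split=> // e /hsm[h1 h2]; rewrite hgd in h1.
exact: etrans (otherP Y_leaf h2 h1) (esym (otherP Y_leaf X_neq_Y X_leaf)).
Qed.

End Leaves.

Lemma lmove_tower (g : 'I_N -> post) d q r : edge c (g d) q -> r <> g d -> r <> q ->
  (forall e : 'I_N, d < e -> g e = r) -> lmove g d q.
Proof. by move=> hdq h1 h2 hr; split=> // e /hr ->. Qed.

Lemma ord_eq_or_gt m (lt_mN : m < N) (k : 'I_N) : m <= k -> k = Ordinal lt_mN \/ m < k.
Proof. by rewrite leq_eqVlt => /orP[/eqP mk|]; [left; apply: val_inj | right]. Qed.

Lemma leaf_leaf_moves_ge X Y m f ms : X <> c -> Y <> c -> X <> Y -> lpath f ms ->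
  (forall e : 'I_N, m <= e -> f e = X) -> (forall e : 'I_N, m <= e -> run f ms e = Y) ->
  forall k : 'I_N, m <= k -> 2 * 3 ^ (k - m) <= disk_moves ms k.
Proof.
move Dn: (N - m) => n.
elim: n m X Y f ms Dn => [|n IH] m X Y f ms Dn hX hY hXY hp hf hfin k hk.
  by have := ltn_ord k; lia.
have lt_mN : m < N by lia.
set d := Ordinal lt_mN; have Dn' : N - m.+1 = n by lia.
have [|s1 [q [s2 [Ems hs1d hp1 hmv1 hp2]]]] := lpath_first_move hp (d := d).
  by apply: nesym; rewrite hfin ?hf.
have [hq hs1] := lmove_from_leaf hX hY hXY hmv1 (etrans hs1d (hf d (leqnn m))).
subst q; set g := set_post _ d c in hp2.
have B1 := IH m.+1 X Y f s1 Dn' hX hY hXY hp1 (fun e he => hf e (ltnW he)) hs1.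
have hg : forall e : 'I_N, m < e -> g e = Y by move=> e he; rewrite /g set_post_gt // hs1.
rewrite Ems run_cat /= in hfin.
have [|s3 [q' [s4 [Es2 hq hp3 hmv3 hp4]]]] := lpath_last_move hp2 (d := d).
  by rewrite hfin // /g set_post_eq.
rewrite hfin // in hq; subst q'.
have [_ hs3] := lmove_to_leaf hX hY hXY hmv3.
have B2 := IH m.+1 Y X g s3 Dn' hY hX (nesym hXY) hp3 hg hs3.
rewrite Es2 run_cat /= in hfin.
have B3 := IH m.+1 X Y _ s4 Dn' hX hY hXY hp4
  (fun e he => etrans (set_post_gt (d := d) _ _ he) (hs3 e he)) (fun e he => hfin e (ltnW he)).
rewrite Ems Es2 !disk_moves_cat.
have [->|lt_mk] := ord_eq_or_gt lt_mN hk; first by rewrite subnn eqxx; lia.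
have := B1 k lt_mk; have := B2 k lt_mk; have := B3 k lt_mk.
have -> : k - m = (k - m.+1).+1 by lia.
have /negPf -> : d != k by rewrite neq_ltn lt_mk.
rewrite expnS; set t := 3 ^ _; lia.
Qed.

Lemma leaf_center_moves_ge X m f ms : X <> c -> lpath f ms ->
  (forall e : 'I_N, m <= e -> f e = X) -> (forall e : 'I_N, m <= e -> run f ms e = c) ->
  forall k : 'I_N, m <= k -> 3 ^ (k - m) <= disk_moves ms k.
Proof.
move Dn: (N - m) => n.
elim: n m X f ms Dn => [|n IH] m X f ms Dn hX hp hf hfin k hk.
  by have := ltn_ord k; lia.
have lt_mN : m < N by lia.
set d := Ordinal lt_mN; have Dn' : N - m.+1 = n by lia.
have [hXY hY] := other_neq hX.
have [|s1 [q [s2 [Ems hs1d hp1 hmv1 hp2]]]] := lpath_first_move hp (d := d).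
  by apply: nesym; rewrite hfin ?hf.
have [hq hs1] := lmove_from_leaf hX hY hXY hmv1 (etrans hs1d (hf d (leqnn m))).
subst q; set g := set_post _ d c in hp2.
have B1 := leaf_leaf_moves_ge hX hY hXY hp1 (fun e he => hf e (ltnW he)) hs1.
have hg : forall e : 'I_N, m < e -> g e = other X c.
  by move=> e he; rewrite /g set_post_gt // hs1.
rewrite Ems run_cat /= in hfin.
have B2 := IH m.+1 _ g s2 Dn' hY hp2 hg (fun e he => hfin e (ltnW he)).
rewrite Ems !disk_moves_cat.
have [->|lt_mk] := ord_eq_or_gt lt_mN hk; first by rewrite subnn eqxx; lia.
have := B1 k lt_mk; have := B2 k lt_mk.
have -> : k - m = (k - m.+1).+1 by lia.
have /negPf -> : d != k by rewrite neq_ltn lt_mk.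
rewrite expnS; set t := 3 ^ _; lia.
Qed.

Fixpoint rev_moves (f : 'I_N -> post) (ms : seq ('I_N * post)) : seq ('I_N * post) :=
  if ms is (d, q) :: ms' then rcons (rev_moves (set_post f d q) ms') (d, f d) else [::].

Lemma lpath_rev f g ms : lpath f ms -> g =1 run f ms ->
  lpath g (rev_moves f ms) /\ run g (rev_moves f ms) =1 f.
Proof.
elim: ms f g => [|[d q] ms IH] f g //= [[hdq hsm] hp] hg.
have [hp' hrun] := IH _ _ hp hg.
rewrite -cats1 lpath_cat run_cat /=; split.
  split=> //; split=> //; apply: lmove_eq (fun e => esym (hrun e)) _.
  split=> [|e he]; first by rewrite set_post_eq; apply: edge_sym.
  by rewrite set_post_eq set_post_gt //; have [] := hsm e he.
move=> e; rewrite /set_post hrun /set_post.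
by case: eqP => [->|].
Qed.

Lemma disk_moves_rev f ms k : disk_moves (rev_moves f ms) k = disk_moves ms k.
Proof.
elim: ms f => [|[d q] ms IH] f //=.
by rewrite /disk_moves -cats1 count_cat -!/(disk_moves _ k) IH /= addn0 addnC.
Qed.

Lemma size_rev_moves f ms : size (rev_moves f ms) = size ms.
Proof. by elim: ms f => [|[d q] ms IH] f //=; rewrite size_rcons IH. Qed.

Lemma center_leaf_moves_ge Y m f ms : Y <> c -> lpath f ms ->
  (forall e : 'I_N, m <= e -> f e = c) -> (forall e : 'I_N, m <= e -> run f ms e = Y) ->
  forall k : 'I_N, m <= k -> 3 ^ (k - m) <= disk_moves ms k.
Proof.
move=> hY hp hf hfin k hk; rewrite -(disk_moves_rev f).
have [hp' hrun] := lpath_rev hp (fun e => erefl).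
by apply: leaf_center_moves_ge hY hp' hfin _ k hk => e he; rewrite hrun hf.
Qed.

Fixpoint transfer_ll (m n : nat) (X Y : post) : seq ('I_N * post) :=
  if n is n'.+1 then
    if insub m is Some d then
      transfer_ll m.+1 n' X Y ++ (d, c) :: transfer_ll m.+1 n' Y X ++
        (d, Y) :: transfer_ll m.+1 n' X Y
    else [::]
  else [::].

Fixpoint transfer_lc (m n : nat) (X : post) : seq ('I_N * post) :=
  if n is n'.+1 then
    if insub m is Some d then
      transfer_ll m.+1 n' X (other X c) ++ (d, c) :: transfer_lc m.+1 n' (other X c)
    else [::]
  else [::].

Lemma transfer_llP X Y n m f : X <> c -> Y <> c -> X <> Y -> m + n = N ->
  (forall e : 'I_N, m <= e -> f e = X) ->
  [/\ lpath f (transfer_ll m n X Y),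
      run f (transfer_ll m n X Y) =1 (fun e => if m <= e then Y else f e)
    & size (transfer_ll m n X Y) = 2 * \sum_(k < n) 3 ^ k].
Proof.
elim: n m X Y f => [|n IH] m X Y f hX hY hXY Dn hf /=.
  split=> [//|e|]; last by rewrite big_ord0.
  by case: ifP => // he; have := ltn_ord e; lia.
have lt_mN : m < N by lia.
rewrite insubT /=; set d : 'I_N := Sub m lt_mN; have Dn' : m.+1 + n = N by lia.
have [p1 e1 z1] := IH m.+1 X Y f hX hY hXY Dn' (fun e he => hf e (ltnW he)).
pose f2 := set_post (run f (transfer_ll m.+1 n X Y)) d c.
have hf2 : forall e : 'I_N, m < e -> f2 e = Y.
  by move=> e he; rewrite /f2 set_post_gt // e1 he.
have [p2 e2 z2] := IH m.+1 Y X f2 hY hX (nesym hXY) Dn' hf2.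
pose f4 := set_post (run f2 (transfer_ll m.+1 n Y X)) d Y.
have hf4 : forall e : 'I_N, m < e -> f4 e = X.
  by move=> e he; rewrite /f4 set_post_gt // e2 he.
have [p3 e3 _] := IH m.+1 X Y f4 hX hY hXY Dn' hf4.
have f1d : run f (transfer_ll m.+1 n X Y) d = X by rewrite e1 ltnn hf.
have f3d : run f2 (transfer_ll m.+1 n Y X) d = c by rewrite e2 ltnn /f2 set_post_eq.
split.
- rewrite lpath_cat /= lpath_cat /= -/f2 -/f4; split=> //; split; [|split=> //; split=> //].
    apply: (lmove_tower (r := Y)); rewrite ?f1d //; [by right | exact: nesym |].
    by move=> e he; rewrite e1 he.
  apply: (lmove_tower (r := X)); rewrite ?f3d //; first by left.
  by move=> e he; rewrite e2 he.
- move=> e; rewrite run_cat /= run_cat /= -/f2 -/f4 e3 /f4 /set_post e2.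
  rewrite /f2 /set_post e1 -[e == d]/(e == m :> nat).
  by case: ltngtP.
- rewrite size_cat /= size_cat /= z1 z2 big_ord_recr /= -(sum_pow3 n).
  by set S := \sum_(_ < n) _; lia.
Qed.

Lemma transfer_lcP X n m f : X <> c -> m + n = N ->
  (forall e : 'I_N, m <= e -> f e = X) ->
  [/\ lpath f (transfer_lc m n X),
      run f (transfer_lc m n X) =1 (fun e => if m <= e then c else f e)
    & size (transfer_lc m n X) = \sum_(k < n) 3 ^ k].
Proof.
elim: n m X f => [|n IH] m X f hX Dn hf /=.
  split=> [//|e|]; last by rewrite big_ord0.
  by case: ifP => // he; have := ltn_ord e; lia.
have lt_mN : m < N by lia.
rewrite insubT /=; set d : 'I_N := Sub m lt_mN; have Dn' : m.+1 + n = N by lia.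
have [hXY hY] := other_neq hX.
have [p1 e1 z1] := transfer_llP hX hY hXY Dn' (fun e he => hf e (ltnW he)).
pose f2 := set_post (run f (transfer_ll m.+1 n X (other X c))) d c.
have hf2 : forall e : 'I_N, m < e -> f2 e = other X c.
  by move=> e he; rewrite /f2 set_post_gt // e1 he.
have [p2 e2 z2] := IH m.+1 _ f2 hY Dn' hf2.
have f1d : run f (transfer_ll m.+1 n X (other X c)) d = X by rewrite e1 ltnn hf.
split.
- rewrite lpath_cat /= -/f2; split=> //; split=> //.
  apply: (lmove_tower (r := other X c)); rewrite ?f1d //; [by right | exact: nesym |].
  by move=> e he; rewrite e1 he.
- move=> e; rewrite run_cat /= -/f2 e2 /f2 /set_post e1 -[e == d]/(e == m :> nat).
  by case: ltngtP.
- rewrite size_cat /= z1 z2 big_ord_recr /= -(sum_pow3 n).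
  by set S := \sum_(_ < n) _; lia.
Qed.

Lemma tower_moves_ge p q (f : 'I_N -> post) ms : edge c p q -> lpath f ms ->
  (forall e, f e = p) -> (forall e, run f ms e = q) ->
  forall k : 'I_N, 3 ^ k <= disk_moves ms k.
Proof.
move=> [[-> hq]|[hp ->]] hpath hf hfin k; rewrite -[X in 3 ^ X]subn0.
- exact: center_leaf_moves_ge hq hpath (fun e _ => hf e) (fun e _ => hfin e) k (leq0n k).
- exact: leaf_center_moves_ge hp hpath (fun e _ => hf e) (fun e _ => hfin e) k (leq0n k).
Qed.

Lemma tower_path_exists p q : edge c p q -> exists ms : seq ('I_N * post),
  [/\ lpath (fun _ => p) ms, run (fun _ => p) ms =1 (fun _ => q)
    & size ms = \sum_(k < N) 3 ^ k].
Proof.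
case=> [[-> hq]|[hp ->]].
- have [hpath hrun hsize] := transfer_lcP (f := fun _ => q) hq (add0n N) (fun _ _ => erefl).
  have [hpath' hrun'] := lpath_rev hpath (g := fun _ => c) (fun e => esym (hrun e)).
  by exists (rev_moves (fun _ => q) (transfer_lc 0 N q)); rewrite size_rev_moves.
- have [hpath hrun hsize] := transfer_lcP (f := fun _ => p) hp (add0n N) (fun _ _ => erefl).
  by exists (transfer_lc 0 N p).
Qed.

End LinearHanoi.

Definition center (cI : color) : post := if cI is Blue then PS else PD.

Lemma coloring_flip_edge cI p q :
  coloring cI q = flipc (coloring cI p) <-> edge (center cI) p q.
Proof. by case: cI; case: p; case: q; rewrite /edge; intuition discriminate. Qed.

Lemma edge_center_PS_PD cI : edge (center cI) PS PD.
Proof. by case: cI; [right | left]. Qed.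

Definition post_moves N (ms : seq ('I_N * config N)) : seq ('I_N * post) :=
  map (fun x => (x.1, pos x.2 x.1)) ms.

Lemma nmoves_post_moves N (ms : seq ('I_N * config N)) k :
  nmoves ms k = disk_moves (post_moves ms) k.
Proof. by rewrite /disk_moves count_map. Qed.

Lemma cpath_lpath N cI (s : config N) ms :
  colored_ok (coloring cI) s -> cpath (coloring cI) s ms ->
  lpath (center cI) (pos s) (post_moves ms) /\
  run (pos s) (post_moves ms) =1 pos (last s (map snd ms)).
Proof.
elim: ms s => [|[d t] ms IH] s hs //=.
move=> [[p [q [[_ [hpd htop] hsize _] [htd hup hoth hok]]]] hrest].
have [hl hrun] := IH t hok hrest.
have ht : pos t =1 set_post (pos s) d (pos t d).
  by move=> e; rewrite /set_post; case: eqP => [->|/hoth[]].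
split; last by move=> e; rewrite -(run_eq _ ht) hrun.
split; last exact: lpath_eq ht hl.
split; first by apply/coloring_flip_edge; rewrite -hok hup hs.
move=> e he; rewrite htd hpd; split=> pe.
  by have := htop e pe; rewrite leqNgt he.
by have := hsize e pe; rewrite ltnNge (ltnW he).
Qed.

Definition colored_config N cI (f : 'I_N -> post) : config N :=
  Config f (fun e => coloring cI (f e)).

Fixpoint config_moves N cI (f : 'I_N -> post) (ms : seq ('I_N * post)) :
    seq ('I_N * config N) :=
  if ms is (d, q) :: ms' then
    (d, colored_config cI (set_post f d q)) :: config_moves cI (set_post f d q) ms'
  else [::].

Lemma cmove_colored N cI (f : 'I_N -> post) d q : lmove (center cI) f d q ->
  cmove (coloring cI) (colored_config cI f) (colored_config cI (set_post f d q)) d.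
Proof.
move=> [hdq hsm]; have ne_dq := edge_neq hdq.
have hcol := proj2 (coloring_flip_edge _ _ _) hdq.
exists (f d), q; split; split=> //=.
- split=> // e pe; rewrite leqNgt; apply/negP => /hsm[] //.
- move=> e pe; case: (ltngtP e d) => // [/hsm[] //|ed].
  by move: pe; rewrite (ord_inj ed).
- by move=> e [/= pe _]; rewrite pe hcol; case: (coloring cI (f d)).
- by rewrite set_post_eq.
- by rewrite set_post_eq hcol.
- by move=> e /eqP ne; rewrite set_post_neq.
Qed.

Lemma lpath_cpath N cI (f : 'I_N -> post) ms : lpath (center cI) f ms ->
  [/\ cpath (coloring cI) (colored_config cI f) (config_moves cI f ms),
      pos (last (colored_config cI f) (map snd (config_moves cI f ms))) =1 run f ms
    & size (config_moves cI f ms) = size ms].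
Proof.
elim: ms f => [|[d q] ms IH] f //= [hmv hp].
have [hc hlast hsize] := IH _ hp.
by split; rewrite ?hsize //; split=> //; apply: cmove_colored.
Qed.

Lemma size_sum_count_fst (T : Type) n (s : seq ('I_n * T)) :
  size s = \sum_(k < n) count (fun x => x.1 == k) s.
Proof.
elim: s => [|x s IH] /=; first by rewrite big1.
rewrite big_split /= -IH (bigD1 x.1) //= eqxx big1 // => k.
by rewrite eq_sym => /negPf ->.
Qed.

Lemma solution_nmoves_ge N cI (ms : seq ('I_N * config N)) :
  csolution (coloring cI) ms -> forall k : 'I_N, 3 ^ k <= nmoves ms k.
Proof.
move=> [hpath hfinal] k; rewrite nmoves_post_moves.
have init_ok : colored_ok (coloring cI) (init_config N) by [].
have [hl hrun] := cpath_lpath init_ok hpath.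
apply: tower_moves_ge (edge_center_PS_PD cI) hl (fun _ => erefl) _ k.
by move=> e; rewrite hrun hfinal.
Qed.

Lemma solution_exists N cI : exists ms : seq ('I_N * config N),
  csolution (coloring cI) ms /\ size ms = \sum_(k < N) 3 ^ k.
Proof.
have [ams [hpath hrun hsize]] := tower_path_exists N (edge_center_PS_PD cI).
have [hc hlast hsize'] := lpath_cpath hpath.
exists (config_moves cI (fun _ => PS) ams); split; last by rewrite hsize'.
by split=> // e; rewrite hlast hrun.
Qed.

Theorem mainTheorem1 (N : nat) (cI : color) : (1 <= N)%N ->
  let S100 := (\sum_(k < N) 3 ^ k)%N in
  [/\ S100 = (3 ^ N - 1) %/ 2,
      (exists ms, @csolution N (coloring cI) ms /\ size ms = S100),
      (forall ms, @csolution N (coloring cI) ms -> (S100 <= size ms)%N)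
    & (forall ms, @csolution N (coloring cI) ms -> size ms = S100 ->
         forall k : 'I_N, nmoves ms k = 3 ^ k)].
Proof.
move=> _ S100; split.
- by rewrite -(sum_pow3 N) subn1 /= mulKn.
- exact: solution_exists.
- move=> ms hms; rewrite size_sum_count_fst.
  by apply: leq_sum => k _; apply: solution_nmoves_ge hms k.
- move=> ms hms hsize k.
  have hle (i : 'I_N) : 3 ^ i <= nmoves ms i ?= iff (3 ^ i == nmoves ms i).
    exact/leqif_eq/(solution_nmoves_ge hms).
  have := (leqif_sum (fun i (_ : true) => hle i)).2.
  rewrite -[X in X == _]/S100 -hsize size_sum_count_fst eqxx.
  by move=> /esym/forall_inP/(_ k isT)/eqP.
Qed.
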